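(* Let $L_1:\Delta_K\times\mathcal{Y}\to\mathbb{R}_+$ be a level-1 loss function satisfying, for every $Q\in\Delta_K^{(2)}$ and every $y\in\mathcal{Y}$, $$L_1\big(\mathbb{E}_{\theta\sim Q}\,\theta,\;y\big)\;\le\;\mathbb{E}_{\theta\sim Q}\,L_1(\theta,y)$$ (for example, any loss that is convex in its first argument, such as the Brier score or the log-loss). Then the level-2 loss $$L_2(Q,y)\;=\;\mathbb{E}_{\theta\sim Q}\,L_1(\theta,y),\qquad Q\in\Delta_K^{(2)},\ y\in\mathcal{Y},$$ is not appropriate. In fact, for every sample size $N$ and every sample $y^{(1)},\dots,y^{(N)}$, an empirical loss minimiser of $\sum_{n=1}^N L_2(Q,y^{(n)})$ over $Q\in\Delta_K^{(2)}$ is attained by a Dirac measure $\delta_{\tilde\theta}$ for some $\tilde\theta\in\Delta_K$.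
   Context: $\mathcal{Y}=\{y_1,\dots,y_K\}$ is a finite label set, $\Delta_K=\{\theta\in[0,1]^K:\|\theta\|_1=1\}$ is the probability simplex identified with the set of probability distributions on $\mathcal{Y}$ (with $\theta(y)=\theta_k$ if $y=y_k$), and $\Delta_K^{(2)}$ denotes the set of probability distributions on $\Delta_K$ (''level-2 distributions''). $\delta_\theta$ denotes the Dirac measure at $\theta\in\Delta_K$. Definition (appropriate level-2 loss). Let $U:\Delta_K^{(2)}\to\mathbb{R}$ be an uncertainty measure, assumed non-constant, maximal at the uniform distribution on $\Delta_K$ and minimal (with a common value) at all Dirac measures. A level-2 loss $L_2:\Delta_K^{(2)}\times\mathcal{Y}\to\mathbb{R}$ is called appropriate if for every ground truth $\theta^*\in\Delta_K$ and every i.i.d. sequence $y^{(1)},y^{(2)},\dots$ with $y^{(i)}\sim\theta^*$, the empirical loss minimiser $Q^{(N)}=\operatorname{argmin}_{Q\in\Delta_K^{(2)}}\sum_{n=1}^N L_2(Q,y^{(n)})$ satisfies: (A1) for every $N$, $\mathbb{E}_{y^{(1:N)}}\big[U(Q^{(N)})\big]\ge\mathbb{E}_{y^{(1:N+1)}}\big[U(Q^{(N+1)})\big]$, and there exist $\tilde N$ and $k$ with $\mathbb{E}_{y^{(1:\tilde N)}}\big[U(Q^{(\tilde N)})\big]>\mathbb{E}_{y^{(1:\tilde N+k)}}\big[U(Q^{(\tilde N+k)})\big]$; (A2) $Q^{(N)}\to\delta_{\theta^*}$ in probability as $N\to\infty$. *)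

From HB Require Import structures.
From mathcomp Require Import all_boot all_order all_algebra.
From mathcomp Require Import all_classical all_reals all_analysis.
Unset Printing Implicit Defensive.
Import Order.TTheory GRing.Theory Num.Theory.
Import numFieldNormedType.Exports.
Local Open Scope classical_set_scope.
Local Open Scope ring_scope.

(* Labels y_1..y_K are 'I_K; theta in Delta_K is a K.-tuple of reals,
   theta(y) = tnth theta y.  Level-2 distributions are probability measures
   on R^K (product sigma-algebra, i.e. Borel) concentrated on Delta_K. *)

Section Defs.
Context {R : realType}.

Definition simplex (K : nat) : set (K.-tuple R) :=
  [set t | (forall i, 0 <= tnth t i) /\ \sum_(i < K) tnth t i = 1].

Definition level2 {K : nat} (Q : probability (K.-tuple R) R) : Prop :=
  Q (simplex K) = 1%E.

Definition mean {K : nat} (Q : probability (K.-tuple R) R) : K.-tuple R :=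
  [tuple fine (\int[Q]_(x in simplex K) (tnth x i)%:E) | i < K].

Definition L2_of {K : nat} (L1 : K.-tuple R -> 'I_K -> R)
  (Q : probability (K.-tuple R) R) (y : 'I_K) : \bar R :=
  \int[Q]_(x in simplex K) (L1 x y)%:E.

Definition emp_loss {K : nat}
  (L2 : probability (K.-tuple R) R -> 'I_K -> \bar R)
  {N : nat} (ys : 'I_N -> 'I_K) (Q : probability (K.-tuple R) R) : \bar R :=
  (\sum_(n < N) L2 Q (ys n))%E.

Definition is_emp_minimiser {K : nat}
  (L2 : probability (K.-tuple R) R -> 'I_K -> \bar R)
  {N : nat} (ys : 'I_N -> 'I_K) (Q : probability (K.-tuple R) R) : Prop :=
  level2 Q /\
  forall Q' : probability (K.-tuple R) R, level2 Q' ->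
    (emp_loss L2 ys Q <= emp_loss L2 ys Q')%E.

Fixpoint iterint {n : nat} : (n.-tuple R -> \bar R) -> \bar R :=
  match n return (n.-tuple R -> \bar R) -> \bar R with
  | 0 => fun f => f [tuple]
  | n'.+1 => fun f =>
      (\int[lebesgue_measure]_x iterint (fun t : n'.-tuple R => f (cons_tuple x t)))%E
  end.

Definition extend_last {k : nat} (x : k.-tuple R) : k.+1.-tuple R :=
  [tuple of rcons x (1 - \sum_(i < k) tnth x i)].

(* Q is the uniform distribution on Delta_K: the push-forward of the
   normalised Lebesgue measure on {x in R^(K-1) | x >= 0, sum x <= 1}
   (volume 1/(K-1)!) by x |-> (x, 1 - sum x). *)
Definition is_uniform_simplex (K : nat) : probability (K.-tuple R) R -> Prop :=
  match K return probability (K.-tuple R) R -> Prop with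
  | 0 => fun _ => False
  | k.+1 => fun Q => forall A : set (k.+1.-tuple R), measurable A ->
      Q A = ((k`!)%:R%:E *
        iterint (fun x : k.-tuple R =>
          (\1_[set z : k.-tuple R | (forall i, 0 <= tnth z i) /\
                 \sum_(i < k) tnth z i <= 1 /\ A (extend_last z)] x)%:E))%E
  end.

Definition uncertainty_measure {K : nat} (U : probability (K.-tuple R) R -> R)
  : Prop :=
  [/\ exists Q1 Q2 : probability (K.-tuple R) R,
        [/\ level2 Q1, level2 Q2 & U Q1 <> U Q2],
      forall Qu : probability (K.-tuple R) R, is_uniform_simplex K Qu ->
        forall Q : probability (K.-tuple R) R, level2 Q -> U Q <= U Qu
    & exists c : R,
        (forall th, simplex K th -> U (dirac th : probability _ R) = c) /\
        (forall Q : probability (K.-tuple R) R, level2 Q -> c <= U Q)].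

Definition sample_prob {K N : nat} (ths : K.-tuple R) (ys : {ffun 'I_N -> 'I_K})
  : R := \prod_(n < N) tnth ths (ys n).

Definition exp_unc {K : nat} (U : probability (K.-tuple R) R -> R)
  (Qsel : forall N, ('I_N -> 'I_K) -> probability (K.-tuple R) R)
  (ths : K.-tuple R) (N : nat) : R :=
  \sum_(ys : {ffun 'I_N -> 'I_K}) sample_prob ths ys * U (Qsel N ys).

Definition cont_on_simplex {K : nat} (f : K.-tuple R -> R) : Prop :=
  forall x, simplex K x -> forall e : R, 0 < e -> exists2 d : R, 0 < d &
    forall z, simplex K z -> (forall i, `|tnth x i - tnth z i| < d) ->
      `|f x - f z| < e.

(* Q^(N) -> delta_{theta*} in probability, w.r.t. the weak topology on
   level-2 distributions (test functions: continuous functions on the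
   compact Delta_K) *)
Definition cvg_in_prob_dirac {K : nat}
  (Qsel : forall N, ('I_N -> 'I_K) -> probability (K.-tuple R) R)
  (ths : K.-tuple R) : Prop :=
  forall f : K.-tuple R -> R, cont_on_simplex f ->
  forall eps : R, 0 < eps ->
    (fun N : nat => \sum_(ys : {ffun 'I_N -> 'I_K} |
        (eps%:E <= `| \int[Qsel N ys]_(x in simplex K) (f x)%:E
                       - (f ths)%:E |)%E) sample_prob ths ys)
      @ \oo --> (0 : R).

Definition A1 {K : nat} (U : probability (K.-tuple R) R -> R)
  (Qsel : forall N, ('I_N -> 'I_K) -> probability (K.-tuple R) R)
  (ths : K.-tuple R) : Prop :=
  (forall N, exp_unc U Qsel ths N.+1 <= exp_unc U Qsel ths N) /\
  (exists Nt k, exp_unc U Qsel ths (Nt + k) < exp_unc U Qsel ths Nt).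

Definition appropriate {K : nat} (U : probability (K.-tuple R) R -> R)
  (L2 : probability (K.-tuple R) R -> 'I_K -> \bar R) : Prop :=
  (forall N (ys : 'I_N -> 'I_K), exists Q, is_emp_minimiser L2 ys Q) /\
  forall ths : K.-tuple R, simplex K ths ->
  forall Qsel : forall N, ('I_N -> 'I_K) -> probability (K.-tuple R) R,
    (forall N (ys : 'I_N -> 'I_K), is_emp_minimiser L2 ys (Qsel N ys)) ->
    A1 U Qsel ths /\ cvg_in_prob_dirac Qsel ths.

End Defs.

From HB Require Import structures.
From mathcomp Require Import all_boot all_order all_algebra.
From mathcomp Require Import all_classical all_reals all_analysis measurable_realfun.
Import Order.TTheory GRing.Theory Num.Theory.
Import numFieldNormedType.Exports.
Local Open Scope classical_set_scope.
Local Open Scope ring_scope.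

(* For a level-2 distribution Q, write E[Q] for its mean.
   Integration against a Dirac measure evaluates the integrand, so
     L2(delta_{E[Q]}, y) <= L1(E[Q], y) <= E_{theta~Q} L1(theta, y) = L2(Q, y)
   by the Jensen-type hypothesis on L1.  Summing over a sample shows that
   the Dirac measure at the mean of an empirical minimiser is again an
   empirical minimiser (second claim).  For the first claim, pick for every
   sample such a Dirac minimiser: an uncertainty measure takes one common
   value c on all Dirac measures, and the probabilities of all samples of
   size N sum to 1, so the expected uncertainty along this selection is c
   for every N and can never strictly decrease, violating (A1). *)

Section Dirac.
Context d (T : measurableType d) (R : realType).
Import HBNNSimple.

Lemma sintegral_dirac (a : T) (h : {nnsfun T >-> R}) :
  sintegral (\d_a : set T -> \bar R) h = (h a)%:E.
Proof.
rewrite sintegralE (fsbigD1 (h a))//=; last by exists a.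
rewrite diracE mem_set// mule1 fsbig1 ?adde0// => r /= [_ rha].
by rewrite diracE memNset ?mule0//=; exact/nesym.
Qed.

Lemma dirac_integral_le (D : set T) (a : T) (f : T -> R) :
  D a -> (forall x, D x -> 0 <= f x) ->
  (\int[\d_a]_(x in D) (f x)%:E <= (f a)%:E)%E.
Proof.
move=> Da f0; rewrite ge0_integralE; last by move=> x Dx; rewrite lee_fin f0.
apply: ge_ereal_sup => _ [h hf <-]; rewrite sintegral_dirac.
by apply: le_trans (hf a) _; rewrite /patch mem_set.
Qed.
End Dirac.


Section Simplex.
Context {R : realType}.

Lemma measurable_simplex K : measurable (simplex K : set (K.-tuple R)).
Proof.
have -> : simplex K = \bigcap_(i in [set: 'I_K])
      ((fun t : K.-tuple R => tnth t i) @^-1` `[0, +oo[) `&`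
    ((fun t : K.-tuple R => \sum_(i < K) tnth t i) @^-1` [set 1]).
  apply/seteqP; split => t /=.
    by move=> [t0 t1]; split => // i _ /=; rewrite in_itv /= andbT t0.
  by move=> [t0 t1]; split => // i; have := t0 i I; rewrite /= in_itv /= andbT.
apply: measurableI.
  apply: fin_bigcap_measurable => [|i _]; first exact: finite_finset.
  by rewrite -[X in measurable X]setTI; apply: measurable_tnth.
rewrite -[X in measurable X]setTI.
by apply: measurable_sum => // i; exact: measurable_tnth.
Qed.

(* For theta* in the simplex, the i.i.d. sample probabilities of all samples
   of size N sum to (sum_k theta*_k)^N = 1. *)
Lemma sample_prob_sum K N (ths : K.-tuple R) : simplex K ths ->
  \sum_(ys : {ffun 'I_N -> 'I_K}) sample_prob ths ys = 1.
Proof.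
move=> [_ ths1]; rewrite /sample_prob.
rewrite -(bigA_distr_bigA (fun (_ : 'I_N) (j : 'I_K) => tnth ths j)) /=.
by rewrite ths1 big1.
Qed.

(* The coordinate means of a level-2 distribution add up to
   \int[Q]_(simplex K) 1 = Q (simplex K) = 1. *)
Lemma coord_integrals_sum {K : nat} {Q : probability (K.-tuple R) R} : level2 Q ->
  (\sum_(i < K) \int[Q]_(x in simplex K) (tnth x i)%:E = 1)%E.
Proof.
move=> Q1; have mS := measurable_simplex K.
rewrite -ge0_integral_sum //; last 2 first.
- by move=> i; apply/measurable_EFinP; apply: measurable_funTS; exact: measurable_tnth.
- by move=> i x [Sx _]; rewrite lee_fin.
transitivity (\int[Q]_(x in simplex K) (cst 1%:E x))%E.
  by apply: eq_integral => x /set_mem [_ Sx]; rewrite sumEFin Sx.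
by rewrite integral_cst // mul1e.
Qed.

Lemma mean_simplex {K : nat} {Q : probability (K.-tuple R) R} :
  level2 Q -> simplex K (mean Q).
Proof.
move=> Q1; set a := fun i : 'I_K => (\int[Q]_(x in simplex K) (tnth x i)%:E)%E.
have a_ge0 i : (0 <= a i)%E by apply: integral_ge0 => x [Sx _]; rewrite lee_fin.
have a_sum : (\sum_(i < K) a i = 1)%E := coord_integrals_sum Q1.
have a_fin i : a i \is a fin_num.
  rewrite ge0_fin_numE //; apply: (@le_lt_trans _ _ 1%E); last exact: ltey.
  by rewrite -a_sum (bigD1 i) //= leeDl // sume_ge0.
split.
  move=> i; rewrite /mean tnth_mktuple; exact: fine_ge0 (a_ge0 i).
apply: EFin_inj; rewrite -sumEFin -a_sum.
by apply: eq_bigr => i _; rewrite /mean tnth_mktuple; exact: fineK (a_fin i).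
Qed.

Lemma level2_dirac K (th : K.-tuple R) :
  simplex K th -> level2 (dirac th : probability _ R).
Proof. by move=> Sth; rewrite /level2 /= diracE mem_set. Qed.

(* Under a Dirac measure the level-2 loss is at most the level-1 loss at the
   atom (no measurability of L1 is needed for this inequality). *)
Lemma L2_dirac_le K (L1 : K.-tuple R -> 'I_K -> R) (th : K.-tuple R) y :
  (forall x, simplex K x -> 0 <= L1 x y) -> simplex K th ->
  (L2_of L1 (dirac th : probability _ R) y <= (L1 th y)%:E)%E.
Proof. by move=> L1_ge0 Sth; apply: dirac_integral_le. Qed.

Lemma exp_unc_const {K : nat} {U : probability (K.-tuple R) R -> R}
    {Qsel : forall N, ('I_N -> 'I_K) -> probability (K.-tuple R) R}
    {ths : K.-tuple R} {c : R} :
  simplex K ths -> (forall N ys, U (Qsel N ys) = c) ->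
  forall N, exp_unc U Qsel ths N = c.
Proof.
move=> Sths Uc N; rewrite /exp_unc.
under eq_bigr do rewrite Uc.
by rewrite -mulr_suml sample_prob_sum // mul1r.
Qed.

End Simplex.

Section Jensen.
Context {R : realType} (K : nat) (L1 : K.-tuple R -> 'I_K -> R).
Hypothesis L1_ge0 : forall th y, simplex K th -> 0 <= L1 th y.
Hypothesis L1_jensen : forall Q : probability (K.-tuple R) R, level2 Q ->
  forall y : 'I_K, ((L1 (mean Q) y)%:E <= L2_of L1 Q y)%E.

Lemma L2_dirac_mean_le (Q : probability (K.-tuple R) R) y : level2 Q ->
  (L2_of L1 (dirac (mean Q) : probability _ R) y <= L2_of L1 Q y)%E.
Proof.
move=> Q1; apply: le_trans (L1_jensen Q Q1 y).
by apply: L2_dirac_le (mean_simplex Q1) => x Sx; exact: L1_ge0.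
Qed.

Lemma dirac_mean_minimiser N (ys : 'I_N -> 'I_K) (Q : probability (K.-tuple R) R) :
  is_emp_minimiser (L2_of L1) ys Q ->
  is_emp_minimiser (L2_of L1) ys (dirac (mean Q) : probability _ R).
Proof.
move=> [Q1 Qmin]; split; first exact/level2_dirac/mean_simplex.
move=> Q' Q'1; apply: le_trans (Qmin Q' Q'1).
by apply: lee_sum => n _; exact: L2_dirac_mean_le.
Qed.

Lemma exists_dirac_minimiser N (ys : 'I_N -> 'I_K)
    (Q : probability (K.-tuple R) R) :
  is_emp_minimiser (L2_of L1) ys Q ->
  exists th, simplex K th /\
    is_emp_minimiser (L2_of L1) ys (dirac th : probability _ R).
Proof.
move=> Qmin; exists (mean Q); split; last exact: dirac_mean_minimiser.
exact/mean_simplex/(proj1 Qmin).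
Qed.

End Jensen.

Theorem theorem1 (R : realType) (K : nat) (L1 : K.-tuple R -> 'I_K -> R)
  (L1_ge0 : forall th y, simplex K th -> 0 <= L1 th y)
  (L1_jensen : forall Q : probability (K.-tuple R) R, level2 Q ->
     forall y : 'I_K, ((L1 (mean Q) y)%:E <= L2_of L1 Q y)%E) :
  (forall U : probability (K.-tuple R) R -> R, uncertainty_measure U ->
     ~ appropriate U (L2_of L1)) /\
  (forall (N : nat) (ys : 'I_N -> 'I_K) (Q : probability (K.-tuple R) R),
     is_emp_minimiser (L2_of L1) ys Q ->
     exists th : K.-tuple R, simplex K th /\
       is_emp_minimiser (L2_of L1) ys (dirac th : probability _ R)).
Proof.
split=> [U [_ _ [c [Uc _]]] [min_ex sel_ok]|]; last exact: exists_dirac_minimiser.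
have dsel N (ys : 'I_N -> 'I_K) : {th | simplex K th /\
    is_emp_minimiser (L2_of L1) ys (dirac th : probability _ R)}.
  by apply: cid; have [Q] := min_ex N ys; exact: exists_dirac_minimiser.
pose Qsel N ys := (dirac (sval (dsel N ys)) : probability _ R).
(* a ground truth in the simplex, e.g. the atom chosen for the empty sample *)
have [th0 [Sth0 _]] := dsel 0%N (ffun0 (card_ord 0)).
have [[_ [Nt [k decr]]] _] := sel_ok th0 Sth0 Qsel
  (fun N ys => proj2 (svalP (dsel N ys))).
(* along a Dirac selection the expected uncertainty is constantly c *)
have unc_c := exp_unc_const Sth0 (fun N ys => Uc _ (proj1 (svalP (dsel N ys)))).
by move: decr; rewrite !unc_c ltxx.
Qed.
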